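(* Let $p$ be an odd prime and let $(G,H,T)$ be the envelope of a right conjugacy closed loop of order $2p$. Let $K$ be a subgroup with $H\lneq K\lneq G$, $|G:K|=2$ and $|K:H|=p$, and put $K_1=\langle T\cap K\rangle$, $H_1=H\cap K_1$. Assume $H\ne1$ and $[s,K_1]=1$ for all $s\in T\setminus K$. Then $H_1=1$, $K_1\le Z(G)$, and $G\cong C_p\wr C_2$.
   Context: For a finite loop $\mathcal{L}$ with identity $e$: $G=\langle R_a\mid a\in\mathcal L\rangle$ with $R_a\colon x\mapsto xa$, $H$ the stabilizer of $e$ in $G$, $T=\{R_a\}$; $(G,H,T)$ is the envelope; the loop is right conjugacy closed if $T$ is a union of conjugacy classes of $G$. *)

From HB Require Import structures.
From mathcomp Require Import all_boot all_order all_fingroup all_solvable.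
Set Implicit Arguments. Unset Strict Implicit. Unset Printing Implicit Defensive.
Local Open Scope group_scope.

(* The permutation induced by f, when f is injective (identity otherwise). *)
Definition mkperm (T : finType) (f : T -> T) : {perm T} :=
  insubd (1 : {perm T}) [ffun x => f x].

Definition is_loop (L : finType) (mul : L -> L -> L) (e : L) : Prop :=
  (forall x, mul e x = x /\ mul x e = x) /\
  (forall a, bijective (mul a)) /\ (forall a, bijective (fun x => mul x a)).

Definition Rmul (L : finType) (mul : L -> L -> L) (a : L) : {perm L} :=
  mkperm (fun x => mul x a).

Definition Tset (L : finType) (mul : L -> L -> L) : {set {perm L}} :=
  [set Rmul mul a | a : L].

Definition Genv (L : finType) (mul : L -> L -> L) : {group {perm L}} :=
  <<Tset mul>>%G.

Definition Henv (L : finType) (mul : L -> L -> L) (e : L) : {group {perm L}} :=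
  'C_(Genv mul)[e | 'P]%G.

Definition rcc (L : finType) (mul : L -> L -> L) : Prop :=
  forall t g, t \in Tset mul -> g \in Genv mul -> t ^ g \in Tset mul.

(* The wreath product C_p wr C_2, as the imprimitive permutation group on
   bool * 'I_p generated by a p-cycle on the first block and the block swap. *)
Definition wr_cyc (p : nat) : {perm (bool * 'I_p)} :=
  mkperm (fun x : bool * 'I_p => if x.1 then x else (x.1, ordS x.2)).
Definition wr_swap (p : nat) : {perm (bool * 'I_p)} :=
  mkperm (fun x : bool * 'I_p => (~~ x.1, x.2)).
Definition wreath_Cp_C2 (p : nat) : {group {perm (bool * 'I_p)}} :=
  <<[set wr_cyc p; wr_swap p]>>%G.

From mathcomp Require Import all_boot all_order all_fingroup all_solvable.
Set Implicit Arguments. Unset Strict Implicit. Unset Printing Implicit Defensive.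
Local Open Scope group_scope.

(* Let K1 = <T :&: K>, which is centralized by the translations outside K.
   An element of H :&: K1 commutes with those translations, so it fixes every
   point outside the K-orbit B of e; as one of them maps B outside B, it fixes B
   too.  Hence H :&: K1 = 1, each k in K1 is the translation R_(k e), and by
   right conjugacy closedness K1 is normal in G and acts semiregularly.  So K1
   is regular on B, of prime order |B| = |K : H| = p, and central.  With
   K1 = <[c]> and b outside B, the points of L get coordinates (flag, i) |->
   c^i e or c^i b; an element of G commutes with c, so it rotates the two
   c-orbits and possibly swaps them, which embeds G into C_p wr C_2.  The
   stabilizer H of e can only rotate the orbit of b, so |H| = p, |G| = 2p^2
   and the embedding is onto. *)

Lemma mkpermE (T : finType) (f : T -> T) : injective f -> mkperm f =1 f.
Proof.
move=> f_inj x; rewrite /mkperm -pvalE val_insubd.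
suff -> : injectiveb [ffun x => f x] by rewrite ffunE.
by apply/injectiveP => y z; rewrite !ffunE => /f_inj.
Qed.

Section Wreath.

Variable p : nat.

Lemma wr_cycE (x : bool * 'I_p) : wr_cyc p x = if x.1 then x else (x.1, ordS x.2).
Proof.
rewrite /wr_cyc mkpermE // => -[[] i] [[] j] //=.
by move=> /(congr1 snd) /ordS_inj ->.
Qed.

Lemma wr_swapE (x : bool * 'I_p) : wr_swap p x = (~~ x.1, x.2).
Proof. by rewrite /wr_swap mkpermE // => -[b i] [c j] /= [/negb_inj -> ->]. Qed.

Lemma wr_swapV : (wr_swap p)^-1 = wr_swap p.
Proof.
apply/eqP; rewrite eq_invg_mul; apply/eqP/permP => x.
by rewrite permM !wr_swapE perm1 negbK; case: x.
Qed.

Lemma wr_cycX n (x : bool * 'I_p) :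
  (wr_cyc p ^+ n) x = if x.1 then x else (x.1, iter n (@ordS p) x.2).
Proof.
elim: n => [|n IHn]; first by rewrite expg0 perm1; case: x => -[].
by rewrite expgSr permM IHn wr_cycE; case: x {IHn} => -[].
Qed.

Lemma wr_cycJX n (x : bool * 'I_p) :
  ((wr_cyc p ^ wr_swap p) ^+ n) x = if x.1 then (x.1, iter n (@ordS p) x.2) else x.
Proof.
by rewrite -conjXg conjgE wr_swapV !permM wr_cycX !wr_swapE; case: x => -[].
Qed.

Lemma iter_ordSE n (i : 'I_p) : val (iter n (@ordS p) i) = (i + n) %% p.
Proof.
elim: n => [|n IHn] /=; first by rewrite addn0 modn_small.
by rewrite IHn addnS -addn1 modnDml addn1.
Qed.

Lemma wr_cycXp : wr_cyc p ^+ p = 1.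
Proof.
apply/permP => x; rewrite wr_cycX perm1.
have -> : iter p (@ordS p) x.2 = x.2 by apply: val_inj; rewrite iter_ordSE modnDr modn_small.
by case: x => -[].
Qed.

Definition wr_elt (fl : bool) (u v : nat) : {perm bool * 'I_p} :=
  wr_cyc p ^+ u * (wr_cyc p ^ wr_swap p) ^+ v * (if fl then wr_swap p else 1).

Definition wr_elts : {set {perm bool * 'I_p}} :=
  [set wr_elt q.1.1 q.1.2 q.2 | q : bool * 'I_p * 'I_p].

Lemma wr_eltE fl u v x :
  wr_elt fl u v x = (x.1 (+) fl, iter (if x.1 then v else u) (@ordS p) x.2).
Proof.
rewrite !permM wr_cycX wr_cycJX.
by case: x => -[] i; case: fl; rewrite /= ?wr_swapE ?perm1.
Qed.

Lemma wr_elt_wreath fl u v : wr_elt fl u v \in wreath_Cp_C2 p.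
Proof.
have cycW : wr_cyc p \in wreath_Cp_C2 p by rewrite mem_gen // !inE eqxx.
have swapW : wr_swap p \in wreath_Cp_C2 p by rewrite mem_gen // !inE eqxx orbT.
by rewrite !groupM ?groupX ?groupJ //; case: fl.
Qed.

Lemma wr_elt_fix v : wr_elt false 0 v \in <[wr_cyc p ^ wr_swap p]>.
Proof. by rewrite /wr_elt expg0 mul1g mulg1 mem_cycle. Qed.

Lemma order_wr_cycJ_dvdn : #[wr_cyc p ^ wr_swap p] %| p.
Proof. by rewrite order_dvdn -conjXg wr_cycXp conj1g. Qed.

Lemma wreath_Cp_C2_eq (X : {group {perm bool * 'I_p}}) :
  1 < p -> X \subset wr_elts -> p * p * 2 <= #|X| -> X :=: wreath_Cp_C2 p.
Proof.
move=> p_gt1 sXW cardX.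
have defX : X :=: wr_elts.
  apply/eqP; rewrite eqEcard sXW (leq_trans _ cardX) //.
  apply: leq_trans (leq_imset_card _ _) _.
  by rewrite cardT -cardE !card_prod card_bool !card_ord -mulnA mulnC.
apply/eqP; rewrite eqEsubset; apply/andP; split.
  by rewrite defX; apply/subsetP => _ /imsetP[q _ ->]; apply: wr_elt_wreath.
have p_gt0 := ltnW p_gt1.
rewrite gen_subG defX; apply/subsetP => w; rewrite !inE => /orP[] /eqP ->; apply/imsetP.
  by exists (false, Ordinal p_gt1, Ordinal p_gt0); rewrite //= /wr_elt expg1 expg0 !mulg1.
by exists (true, Ordinal p_gt0, Ordinal p_gt0); rewrite //= /wr_elt !expg0 !mul1g.
Qed.

End Wreath.

Section PermTransport.

Variables (A L : finType) (f : A -> L) (g : L -> A).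
Hypotheses (fK : cancel f g) (gK : cancel g f).

Definition perm_transport (s : {perm L}) : {perm A} := mkperm (g \o s \o f).

Lemma perm_transportE s : perm_transport s =1 g \o s \o f.
Proof.
by apply: mkpermE => a b /(can_inj gK) /perm_inj /(can_inj fK).
Qed.

Lemma perm_transportM : {in [set: {perm L}] &, {morph perm_transport : s t / s * t}}.
Proof.
by move=> s t _ _; apply/permP => a; rewrite permM !perm_transportE /= permM gK.
Qed.

Canonical perm_transport_morphism := Morphism perm_transportM.

Lemma injm_perm_transport : 'injm perm_transport_morphism.
Proof.
apply/injmP => s t _ _ /= eq_st; apply/permP => x.
have /(congr1 f) := congr1 (fun w : {perm A} => w (g x)) eq_st.
by rewrite !perm_transportE /= !gK.
Qed.

Lemma perm_transport_sub (G : {group {perm L}}) (X : {set {perm A}}) :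
    (forall s, s \in G -> exists2 w, w \in X & forall a, s (f a) = f (w a)) ->
  perm_transport_morphism @* G \subset X.
Proof.
move=> conjG; apply/subsetP => _ /morphimP[s _ Gs ->].
have [w Xw sfE] := conjG s Gs.
suff -> : perm_transport_morphism s = w by [].
by apply/permP => a; rewrite perm_transportE /= sfE fK.
Qed.

End PermTransport.

Section WreathRecognition.

Variables (p : nat) (L : finType) (G : {group {perm L}}) (c : {perm L}) (e b : L).
Hypotheses (p_gt1 : 1 < p) (cardL : #|L| = (2 * p)%N).
Hypotheses (ord_c : #[c] = p) (cGc : c \in 'C(G)).
Hypothesis c_semiregular : forall k x, k \in <[c]> -> k x = x -> k = 1.
Hypothesis b_notin_orbit : forall k, k \in <[c]> -> k e != b.

Definition block_base (fl : bool) : L := if fl then b else e.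

Definition orbit_coord (q : bool * 'I_p) : L := (c ^+ q.2) (block_base q.1).

Lemma cycle_perm_comm s k x : s \in G -> k \in <[c]> -> s (k x) = k (s x).
Proof.
move=> Gs /cycleP[i ->].
have cs : commute (c ^+ i) s by apply/commute_sym/commuteX/commute_sym/(centP cGc).
by rewrite -!permM cs.
Qed.

Lemma orbit_coord_inj : injective orbit_coord.
Proof.
move=> [fl i] [fl' j]; rewrite /orbit_coord /= => eq_ij.
set k := c ^+ i * (c ^+ j)^-1.
have ck : k \in <[c]> by rewrite groupM ?groupV ?mem_cycle.
have kE : k (block_base fl) = block_base fl' by rewrite permM eq_ij permK.
have fl_eq : fl = fl'.
  case: fl fl' {eq_ij} kE => [] [] //= kE; last by move: (b_notin_orbit ck); rewrite kE eqxx.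
  by move: (b_notin_orbit (groupVr ck)); rewrite -kE permK eqxx.
subst fl'; congr (_, _); apply/val_inj/eqP.
move/(c_semiregular ck)/eqP: kE; rewrite -eq_mulgV1 eq_expg_mod_order ord_c.
by rewrite !modn_small.
Qed.

Lemma orbit_coord_bij : bijective orbit_coord.
Proof.
by apply: inj_card_bij orbit_coord_inj _; rewrite card_prod card_bool card_ord cardL.
Qed.

Lemma orbit_coord_surj x : exists q, x = orbit_coord q.
Proof. by have [g _ gK] := orbit_coord_bij; exists (g x); rewrite gK. Qed.

Lemma perm_orbit_coordE s fl u v :
    s \in G -> s e = (c ^+ u) (block_base fl) -> s b = (c ^+ v) (block_base (~~ fl)) ->
  forall q, s (orbit_coord q) = orbit_coord (wr_elt p fl u v q).
Proof.
move=> Gs seE sbE [fl' i]; rewrite /orbit_coord wr_eltE /= cycle_perm_comm ?mem_cycle //.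
have cX_mod n : c ^+ (n %% p) = c ^+ n by rewrite -ord_c expg_mod_order.
by rewrite iter_ordSE cX_mod addnC expgD permM; case: fl'; rewrite /= ?seE ?sbE.
Qed.

Lemma perm_block_swap s fl u : s \in G -> s e = (c ^+ u) (block_base fl) ->
  exists v : 'I_p, s b = (c ^+ v) (block_base (~~ fl)).
Proof.
move=> Gs seE; have [[fl' v] sbE] := orbit_coord_surj (s b); exists v.
suff : fl' != fl by rewrite sbE; case: fl fl' {seE sbE} => [] [].
apply/eqP=> eq_fl; subst fl'.
set k := (c ^+ u)^-1 * c ^+ v.
have ck : k \in <[c]> by rewrite groupM ?groupV ?mem_cycle.
have /perm_inj : s (k e) = s b by rewrite cycle_perm_comm // seE permM permK sbE.
by apply/eqP; apply: b_notin_orbit.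
Qed.

Lemma perm_orbit_coord s :
  s \in G -> exists2 w, w \in wr_elts p & forall q, s (orbit_coord q) = orbit_coord (w q).
Proof.
move=> Gs; have [[fl u] seE] := orbit_coord_surj (s e).
have [v sbE] := perm_block_swap Gs seE.
exists (wr_elt p fl u v); first by apply/imsetP; exists (fl, u, v).
exact: perm_orbit_coordE.
Qed.

Lemma perm_orbit_coord_fix s : s \in G -> s e = e ->
  exists2 w, w \in <[wr_cyc p ^ wr_swap p]> & forall q, s (orbit_coord q) = orbit_coord (w q).
Proof.
move=> Gs se; have seE : s e = (c ^+ 0) (block_base false) by rewrite expg0 perm1.
have [v sbE] := perm_block_swap Gs seE.
by exists (wr_elt p false 0 v); [apply: wr_elt_fix | apply: perm_orbit_coordE].
Qed.

Lemma card_stab_dvdn : #|'C_G[e | 'P]| %| p.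
Proof.
have [g coordK gK] := orbit_coord_bij.
rewrite -(card_injm (injm_perm_transport coordK gK) (subsetT _)).
apply: dvdn_trans (cardSg (perm_transport_sub coordK gK _)) (order_wr_cycJ_dvdn p).
by move=> s /setIP[Gs /astab1P]; apply: perm_orbit_coord_fix.
Qed.

Lemma isog_wreath_Cp_C2 : #|G| = (p * p * 2)%N -> G \isog wreath_Cp_C2 p.
Proof.
move=> cardG; have [g coordK gK] := orbit_coord_bij.
have injPhi := injm_perm_transport coordK gK.
rewrite -(wreath_Cp_C2_eq p_gt1 (perm_transport_sub coordK gK perm_orbit_coord)).
  exact: sub_isog (subsetT G) injPhi.
by rewrite card_injm ?subsetT ?cardG.
Qed.

End WreathRecognition.

Lemma mulg_notin_index2 (gT : finGroupType) (G K : {group gT}) x y :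
    K \subset G -> #|G : K| = 2 -> x \in G :\: K -> y \in G :\: K ->
  x * y \in K.
Proof.
move=> sKG iGK GKx GKy.
have : x \in K :* y^-1.
  by case/setDP: GKy => Gy /negPf Ky; rewrite (rcoset_index2 sKG iGK) // !inE !groupV Gy Ky.
by rewrite mem_rcoset invgK.
Qed.

Section Envelope.

Variables (L : finType) (mul : L -> L -> L) (e : L).
Hypothesis loopL : is_loop mul e.

Local Notation R := (Rmul mul).
Local Notation T := (Tset mul).
Local Notation G := (Genv mul).
Local Notation H := (Henv mul e).

Lemma RmulE a x : R a x = mul x a.
Proof. by have [_ [_ rbij]] := loopL; apply: mkpermE; apply: bij_inj. Qed.

Lemma Rmul_e a : R a e = a.
Proof. by rewrite RmulE; have [/(_ a)[]] := loopL. Qed.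

Lemma Rmul_Tset a : R a \in T.
Proof. exact: imset_f. Qed.

Lemma Tset_Genv : T \subset G.
Proof. exact: subset_gen. Qed.

Lemma Rmul_Genv a : R a \in G.
Proof. exact: subsetP Tset_Genv _ (Rmul_Tset a). Qed.

Lemma mem_Henv g : (g \in H) = (g \in G) && (g e == e).
Proof. by rewrite inE (sameP astab1P eqP). Qed.

Lemma Genv_Rmul_factor g : g \in G -> g * (R (g e))^-1 \in H.
Proof.
move=> Gg; rewrite mem_Henv groupM ?groupV ?Rmul_Genv //= permM.
by rewrite -[X in _ == X](permK (R (g e)) e) Rmul_e.
Qed.

Section IndexTwo.

Variable K : {group {perm L}}.
Hypotheses (sHK : H \subset K) (sKG : K \subset G) (iGK : #|G : K| = 2).

(* The [K]-orbit of [e] (see [card_Kblock]), a block of imprimitivity of [G]. *)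
Definition Kblock : {set L} := [set x | R x \in K].

Lemma mem_K_Rmul g : g \in G -> (g \in K) = (R (g e) \in K).
Proof.
move=> Gg; have /(subsetP sHK) Kgr := Genv_Rmul_factor Gg.
by rewrite -(groupMl (R (g e)) Kgr) mulgKV.
Qed.

Lemma e_Kblock : e \in Kblock.
Proof. by rewrite inE -[e in R e](perm1 e) -mem_K_Rmul. Qed.

Lemma Kblock_act g x : g \in G -> (g x \in Kblock) = ((x \in Kblock) == (g \in K)).
Proof.
move=> Gg; rewrite !inE.
have -> : (R (g x) \in K) = (R x * g \in K).
  by rewrite [RHS]mem_K_Rmul ?groupM ?Rmul_Genv // permM Rmul_e.
case Kx: (R x \in K); first by rewrite groupMl.
case Kg: (g \in K); first by rewrite groupMr // Kx.
by rewrite (mulg_notin_index2 sKG iGK) // !inE ?Kx ?Kg ?Rmul_Genv.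
Qed.

Lemma Kblock_actK k x : k \in K -> (k x \in Kblock) = (x \in Kblock).
Proof. by move=> Kk; rewrite Kblock_act ?(subsetP sKG) // Kk eqb_id. Qed.

Lemma card_Kblock : #|Kblock| = #|K : H|.
Proof.
have -> : Kblock = orbit 'P K e.
  apply/setP => x; apply/idP/imsetP => [Bx | [k Kk ->]]; last by rewrite Kblock_actK ?e_Kblock.
  by exists (R x); [rewrite inE in Bx | exact/esym/Rmul_e].
rewrite card_orbit; congr #|K : _|; apply/eqP.
rewrite eqEsubset subsetI subsetIr (subset_trans (subsetIl _ _) sKG) subsetI sHK.
exact: subsetIr.
Qed.

Lemma Tset_notin_K : exists s, s \in T :\: K.
Proof.
apply/set0Pn; rewrite setD_eq0; apply/negP => sTK.
have /eqP iGK1 : #|G : K| == 1%N by rewrite indexg_eq1 gen_subG.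
by move: iGK; rewrite iGK1.
Qed.

Lemma Kact_e_neq k s : k \in K -> s \in G :\: K -> k e != s e.
Proof.
move=> Kk /setDP[Gs /negPf Ks]; apply/eqP => eq_e.
by have := Kblock_act e Gs; rewrite -eq_e Kblock_actK // e_Kblock Ks.
Qed.

Local Notation K1 := <<T :&: K>>.

Lemma K1_sub_K : K1 \subset K.
Proof. by rewrite gen_subG subsetIr. Qed.

Lemma K1_sub_G : K1 \subset G.
Proof. exact: subset_trans K1_sub_K sKG. Qed.

Hypothesis cTK1 : forall s k, s \in T :\: K -> k \in K1 -> commute s k.

Lemma Henv_K1 : H :&: K1 = 1.
Proof.
apply/trivgP/subsetP => h /setIP[Hh K1h]; rewrite inE; apply/eqP/permP => x.
have he : h e = e by move: Hh; rewrite mem_Henv => /andP[_ /eqP].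
have h_fix_out y : y \notin Kblock -> h y = y.
  rewrite inE => By; have cyh : commute (R y) h.
    by apply: cTK1; rewrite // in_setD Rmul_Tset andbT.
  by rewrite -[in h y](Rmul_e y) -permM cyh permM he Rmul_e.
have [s0 T'Ks0] := Tset_notin_K; have /setDP[Ts0 /negPf Ks0] := T'Ks0.
have Gs0 := subsetP Tset_Genv _ Ts0.
rewrite perm1; case Bx: (x \in Kblock); last by rewrite h_fix_out ?Bx.
apply: (@perm_inj _ s0); rewrite -permM -(cTK1 T'Ks0 K1h) permM h_fix_out //.
by rewrite Kblock_act // Bx Ks0.
Qed.

Lemma K1_Rmul k : k \in K1 -> k = R (k e).
Proof.
move=> K1k; have Kk := subsetP K1_sub_K k K1k.
have K1R : R (k e) \in K1.
  have : k e \in Kblock by rewrite Kblock_actK ?e_Kblock.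
  by rewrite inE => Kke; rewrite mem_gen // inE Rmul_Tset.
have : k * (R (k e))^-1 \in H :&: K1.
  by rewrite inE Genv_Rmul_factor ?(subsetP sKG) ?groupM ?groupV.
by rewrite Henv_K1 inE -eq_mulgV1 => /eqP.
Qed.

Lemma card_K1 : #|K1| = #|Kblock|.
Proof.
have eval_inj : {in K1 &, injective (fun k : {perm L} => k e)}.
  by move=> k1 k2 K1k1 K1k2 /= eq_ke; rewrite (K1_Rmul K1k1) (K1_Rmul K1k2) eq_ke.
rewrite -(card_in_imset eval_inj); apply: eq_card => x.
apply/imsetP/idP => [[k K1k ->] | Bx].
  by rewrite Kblock_actK ?e_Kblock ?(subsetP K1_sub_K).
exists (R x); last by rewrite Rmul_e.
by rewrite inE in Bx; rewrite mem_gen // in_setI Rmul_Tset.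
Qed.

Lemma K1_center : abelian K1 -> K1 \subset 'Z(G).
Proof.
move=> abK1; rewrite subsetI K1_sub_G centsC gen_subG.
apply/subsetP => t Tt; case Kt: (t \in K).
  by apply: (subsetP abK1); rewrite mem_gen // inE Tt.
by apply/centP => k K1k; apply: cTK1; rewrite // inE Kt.
Qed.

Hypothesis rccL : rcc mul.

Lemma K1_conj k g : k \in K1 -> g \in G -> k ^ g \in K1.
Proof.
move=> K1k Gg; have nKg := subsetP (normal_norm (index2_normal sKG iGK)) g Gg.
rewrite (K1_Rmul K1k) mem_gen // inE rccL ?Rmul_Tset // memJ_norm //.
by rewrite -(K1_Rmul K1k) (subsetP K1_sub_K).
Qed.

Lemma K1_semiregular k x : k \in K1 -> k x = x -> k = 1.
Proof.
move=> K1k kx; have Gk := subsetP K1_sub_G k K1k.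
have : k ^ (R x)^-1 \in H :&: K1.
  rewrite inE K1_conj ?groupV ?Rmul_Genv // mem_Henv groupJ ?groupV ?Rmul_Genv //=.
  by rewrite conjgE invgK !permM Rmul_e kx andbT -{2}(Rmul_e x) permK.
by rewrite Henv_K1 inE conjg_eq1 => /eqP.
Qed.

End IndexTwo.

End Envelope.

Unset Implicit Arguments.

Theorem proposition5p5 (p : nat) (L : finType) (mul : L -> L -> L) (e : L)
  (K : {group {perm L}}) :
  prime p -> odd p ->
  is_loop mul e -> #|L| = (2 * p)%N -> rcc mul ->
  Henv mul e \proper K -> K \proper Genv mul ->
  #|Genv mul : K| = 2 -> #|K : Henv mul e| = p ->
  Henv mul e != 1 :> {set {perm L}} ->
  (forall s k, s \in Tset mul :\: K -> k \in <<Tset mul :&: K>> -> commute s k) ->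
  [/\ Henv mul e :&: <<Tset mul :&: K>> = 1,
      <<Tset mul :&: K>> \subset 'Z(Genv mul)
    & Genv mul \isog wreath_Cp_C2 p].
Proof.
(* The argument does not use that [p] is odd. *)
move=> pr_p _ loopL cardL rccL /proper_sub sHK /proper_sub sKG iGK iKH ntH cTK1.
have cardK1 : #|<<Tset mul :&: K>>| = p.
  by rewrite (card_K1 loopL sHK sKG iGK cTK1) (card_Kblock loopL sHK sKG iGK).
have cycK1 : cyclic <<Tset mul :&: K>> by rewrite prime_cyclic ?cardK1.
have ZK1 := K1_center sKG cTK1 (cyclic_abelian cycK1).
split=> //; first exact (Henv_K1 loopL sHK sKG iGK cTK1).
have [c defK1] := cyclicP cycK1.
have [s0 /(subsetP (setSD K (Tset_Genv mul))) G'Ks0] := Tset_notin_K iGK.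
have p_gt1 := prime_gt1 pr_p.
have ord_c : #[c] = p by rewrite -cardK1 defK1.
have cGc : c \in 'C(Genv mul).
  by have /(subsetP ZK1)/setIP[] : c \in <<Tset mul :&: K>> by rewrite defK1 cycle_id.
have c_semiregular k x : k \in <[c]> -> k x = x -> k = 1.
  by rewrite -defK1; apply: (K1_semiregular loopL sHK sKG iGK cTK1 rccL).
have s0e_notin k : k \in <[c]> -> k e != s0 e.
  rewrite -defK1 => /(subsetP (K1_sub_K _ _)) Kk.
  exact: (Kact_e_neq loopL sHK sKG iGK Kk G'Ks0).
have cardH : #|Henv mul e| = p.
  apply/(prime_nt_dvdP pr_p); first by rewrite -trivg_card1.
  exact: card_stab_dvdn cardL ord_c cGc c_semiregular s0e_notin.
apply: (isog_wreath_Cp_C2 p_gt1 cardL ord_c cGc c_semiregular s0e_notin).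
by rewrite -(Lagrange sKG) iGK -(Lagrange sHK) iKH cardH mulnC.
Qed.
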